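(* Let $\mathcal{I}\subseteq[K]$ be nonempty, let $\psi:\Omega\to\mathbb{R}$ ($\Omega\subseteq\mathbb{R}$) be strictly convex, and let positive learning rates $\gamma^t_i,\gamma^{t+1}_i$ be such that for every $i$ and $s\in\{t,t+1\}$ the function $\gamma^s_i\psi$ is twice differentiable with invertible derivative whose inverse is differentiable and convex. Let $\phi^s_{\mathcal{I}}(x)=\sum_{i\in\mathcal{I}}\gamma^s_i\psi(x_i)$, $\hat\ell^t\in\mathbb{R}^K$, $c\in\mathbb{R}$, and let $p,q$ with $p_i,q_i\in\Omega$ for $i\in\mathcal{I}$ and $\sum_{i\in\mathcal{I}}p_i=\sum_{i\in\mathcal{I}}q_i$. (a) If $\nabla\phi^{t+1}_{\mathcal{I}}(q)=\nabla\phi^t_{\mathcal{I}}(p)-\hat\ell^t_{\mathcal{I}}+c\cdot\mathbf{1}_{\mathcal{I}}$, then $$c\le\Big(\sum_{i\in\mathcal{I}}\frac{1}{\gamma^{t+1}_i\psi''(p_i)}\Big)^{-1}\sum_{i\in\mathcal{I}}\frac{(\gamma^{t+1}_i-\gamma^t_i)\psi'(p_i)+\hat\ell^t_i}{\gamma^{t+1}_i\psi''(p_i)},\qquad c\ge\Big(\sum_{i\in\mathcal{I}}\frac{1}{\gamma^{t}_i\psi''(q_i)}\Big)^{-1}\sum_{i\in\mathcal{I}}\frac{(\gamma^{t+1}_i-\gamma^t_i)\psi'(q_i)+\hat\ell^t_i}{\gamma^{t}_i\psi''(q_i)}.$$ (b) If $\nabla\phi^{t}_{\mathcal{I}}(q)=\nabla\phi^t_{\mathcal{I}}(p)-\hat\ell^t_{\mathcal{I}}+c\cdot\mathbf{1}_{\mathcal{I}}$,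 then $$\Big(\sum_{i\in\mathcal{I}}\frac{1}{\gamma^{t}_i\psi''(q_i)}\Big)^{-1}\sum_{i\in\mathcal{I}}\frac{\hat\ell^t_i}{\gamma^{t}_i\psi''(q_i)}\le c\le\Big(\sum_{i\in\mathcal{I}}\frac{1}{\gamma^{t}_i\psi''(p_i)}\Big)^{-1}\sum_{i\in\mathcal{I}}\frac{\hat\ell^t_i}{\gamma^{t}_i\psi''(p_i)}.$$
   Context: Gradients of $\phi^s_{\mathcal{I}}$ are taken coordinatewise on $\mathcal{I}$; $v_{\mathcal{I}}$ denotes the vector agreeing with $v$ on $\mathcal{I}$ and $0$ elsewhere, and $\mathbf{1}_{\mathcal{I}}$ is the indicator vector of $\mathcal{I}$. The equations are required coordinatewise for $i\in\mathcal{I}$. *)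

From mathcomp Require Import all_boot.
From Stdlib Require Import Reals.
From Coquelicot Require Import Coquelicot.

Set Implicit Arguments.
Unset Strict Implicit.
Unset Printing Implicit Defensive.

Local Open Scope R_scope.

Definition sumI (K : nat) (I : {set 'I_K}) (F : 'I_K -> R) : R :=
  \big[Rplus/0]_(i in I) F i.

Definition omega_open_interval (Omega : R -> Prop) : Prop :=
  (forall x y z, Omega x -> Omega z -> x <= y <= z -> Omega y) /\
  (forall x, Omega x -> exists eps, 0 < eps /\
       forall y, Rabs (y - x) < eps -> Omega y).

Definition strictly_convex_on (Omega : R -> Prop) (psi : R -> R) : Prop :=
  forall x y l, Omega x -> Omega y -> x <> y -> 0 < l < 1 ->
    psi (l * x + (1 - l) * y) < l * psi x + (1 - l) * psi y.

Definition regular_rate (Omega : R -> Prop) (psi : R -> R) (gamma : R) : Prop :=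
  let f := fun x => gamma * psi x in
  (forall x, Omega x -> ex_derive f x /\ ex_derive (Derive f) x) /\
  exists h : R -> R,
    (forall x, Omega x -> h (Derive f x) = x) /\
    (forall x, Omega x -> ex_derive h (Derive f x)) /\
    (forall x y l, Omega x -> Omega y -> 0 <= l <= 1 ->
       h (l * Derive f x + (1 - l) * Derive f y)
         <= l * h (Derive f x) + (1 - l) * h (Derive f y)).

Definition phi (K : nat) (g : 'I_K -> R) (psi : R -> R) (I : {set 'I_K})
  (x : 'I_K -> R) : R :=
  sumI I (fun i => g i * psi (x i)).

Definition grad_phi (K : nat) (g : 'I_K -> R) (psi : R -> R) (I : {set 'I_K})
  (x : 'I_K -> R) (i : 'I_K) : R :=
  Derive (fun y => phi g psi I (fun j => if j == i then y else x j)) (x i).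

(* Write f_i = gamma_i psi and let h_i be the inverse of f_i'.  Since
   h_i (f_i' t) = t near u, the chain rule gives h_i'(f_i' u) = 1 / f_i''(u), and
   the tangent inequality of the convex h_i at f_i'(u) reads
     (f_i'(v) - f_i'(u)) / f_i''(u) <= v - u        for u, v in Omega.
   Take (u, v) = (p_i, q_i) with the new rates for the upper bound on c, and
   (u, v) = (q_i, p_i) with the old rates for the lower bound.  The gradient
   equation makes the left-hand side affine in c, the right-hand sides sum to 0
   because sum p = sum q, and f_i'' > 0 (psi is convex and f_i'' h_i' = 1), so
   summing over I and solving for c gives (a).  Part (b) is (a) with
   gamma^{t+1} = gamma^t. *)

From HB Require Import structures.
From mathcomp Require Import all_boot.
From Stdlib Require Import Reals Lra.
From Coquelicot Require Import Coquelicot.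

Set Implicit Arguments.
Unset Strict Implicit.

Local Open Scope R_scope.

HB.instance Definition _ :=
  Monoid.isComLaw.Build R 0 Rplus (fun a b c => esym (Rplus_assoc a b c)) Rplus_comm Rplus_0_l.

Section IndexSums.

Variables (K : nat) (I : {set 'I_K}).

Lemma eq_sumI (F G : 'I_K -> R) : (forall i, F i = G i) -> sumI I F = sumI I G.
Proof. by move=> FG; apply: eq_bigr. Qed.

Lemma sumIN (F : 'I_K -> R) : sumI I (fun i => - F i) = - sumI I F.
Proof. by rewrite /sumI (big_morph Ropp Ropp_plus_distr Ropp_0). Qed.

Lemma sumI_lincomb a b (F G : 'I_K -> R) :
  sumI I (fun i => a * F i + b * G i) = a * sumI I F + b * sumI I G.
Proof.
rewrite /sumI; apply: (big_rec3 (fun x y z => x = a * y + b * z)); first ring.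
by move=> i x y z _ ->; ring.
Qed.

Lemma sumI_le (F G : 'I_K -> R) :
  (forall i, i \in I -> F i <= G i) -> sumI I F <= sumI I G.
Proof.
move=> FG; apply: (big_ind2 (fun x y => x <= y)) => //; [lra | move=> *; lra].
Qed.

Lemma sumI_gt0 (F : 'I_K -> R) :
  I != set0 -> (forall i, i \in I -> 0 < F i) -> 0 < sumI I F.
Proof.
move=> /set0Pn [j Ij] F_gt0; rewrite /sumI (bigD1 j Ij) /=.
apply: Rplus_lt_le_0_compat; first exact: F_gt0.
apply: (big_ind (fun x => 0 <= x)) => [|*|i /andP [Ii _]]; [lra | lra |].
exact/Rlt_le/F_gt0.
Qed.

Lemma le_sumI_ratio (d B u v : 'I_K -> R) c :
  I != set0 -> (forall i, i \in I -> 0 < d i) ->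
  (forall i, i \in I -> (c - B i) / d i <= u i - v i) -> sumI I u = sumI I v ->
  c <= / sumI I (fun i => 1 / d i) * sumI I (fun i => B i / d i).
Proof.
move=> I_neq0 d_gt0 gap_le uv.
have S_gt0 : 0 < sumI I (fun i => 1 / d i).
  by apply: sumI_gt0 => // i Ii; apply: Rdiv_lt_0_compat; [lra | exact: d_gt0].
have : c * sumI I (fun i => 1 / d i) + (-1) * sumI I (fun i => B i / d i)
    <= 1 * sumI I u + (-1) * sumI I v.
  rewrite -!sumI_lincomb; apply: sumI_le => i Ii.
  have d_pos := d_gt0 i Ii.
  have gap : (c - B i) / d i = c * (1 / d i) + -1 * (B i / d i) by field; lra.
  have := gap_le i Ii; lra.
rewrite uv => le_S.
apply: (Rmult_le_reg_l _ _ _ S_gt0); rewrite -Rmult_assoc Rinv_r; lra.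
Qed.

Lemma sumI_ratio_le (d B u v : 'I_K -> R) c :
  I != set0 -> (forall i, i \in I -> 0 < d i) ->
  (forall i, i \in I -> (B i - c) / d i <= u i - v i) -> sumI I u = sumI I v ->
  / sumI I (fun i => 1 / d i) * sumI I (fun i => B i / d i) <= c.
Proof.
move=> I_neq0 d_gt0 gap_le uv.
have sum_opp : sumI I (fun i => - B i / d i) = - sumI I (fun i => B i / d i).
  by rewrite -sumIN; apply: eq_sumI => i; exact: Rdiv_opp_l.
suff : - c <= / sumI I (fun i => 1 / d i) * sumI I (fun i => - B i / d i).
  by rewrite sum_opp -Ropp_mult_distr_r; lra.
apply: le_sumI_ratio uv => // i Ii.
by rewrite (_ : - c - - B i = B i - c); [exact: gap_le | ring].
Qed.

End IndexSums.

Lemma is_derive_le_right_quotient (G : R -> R) u D M e :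
  is_derive G u D -> 0 < e ->
  (forall h, 0 < h < e -> (G (u + h) - G u) / h <= M) -> D <= M.
Proof.
move=> /is_derive_Reals HD e_gt0 quotient_le; apply: Rnot_lt_le => M_lt_D.
have [delta near_D] := HD (D - M) ltac:(lra).
have delta_gt0 := cond_pos delta.
have min_gt0 : 0 < Rmin delta e by apply: Rmin_glb_lt.
set h := Rmin delta e / 2.
have h_lt_delta : h < delta by have := Rmin_l delta e; rewrite /h; lra.
have h_lt_e : h < e by have := Rmin_r delta e; rewrite /h; lra.
have h_gt0 : 0 < h by rewrite /h; lra.
have h_small : Rabs h < delta by rewrite Rabs_pos_eq; lra.
have /Rabs_def2 [_ ?] := near_D h (Rgt_not_eq _ _ h_gt0) h_small.
have := quotient_le h (conj h_gt0 h_lt_e); lra.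
Qed.

Lemma is_derive_ge0_right_nondecreasing (G : R -> R) u D e :
  is_derive G u D -> 0 < e -> (forall h, 0 < h < e -> G u <= G (u + h)) -> 0 <= D.
Proof.
move=> HD e_gt0 G_nondecr.
suff : - D <= 0 by lra.
have HD' : is_derive (fun x => - G x) u (- D) by apply: is_derive_opp.
apply: (is_derive_le_right_quotient HD' e_gt0) => h h_range.
apply/Rle_div_l; first lra.
have := G_nondecr h h_range; lra.
Qed.

Lemma convex_tangent_le (F : R -> R) x y D :
  is_derive F x D ->
  (forall l, 0 < l < 1 -> F (l * y + (1 - l) * x) <= l * F y + (1 - l) * F x) ->
  D * (y - x) <= F y - F x.
Proof.
move=> HD F_convex.
set k := fun l => F (l * y + (1 - l) * x).
have k0 : k 0 = F x by rewrite /k; f_equal; ring.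
have Hk : is_derive k 0 (D * (y - x)).
  rewrite Rmult_comm; apply: (is_derive_comp F).
    by have -> : 0 * y + (1 - 0) * x = x by ring.
  by auto_derive; [|ring].
apply: (is_derive_le_right_quotient Hk Rlt_0_1) => l l_range.
rewrite Rplus_0_l k0; apply/Rle_div_l; first lra.
have := F_convex l l_range; rewrite /k; lra.
Qed.

Lemma strictly_convex_Derive_le (Omega : R -> Prop) (psi : R -> R) u v :
  strictly_convex_on Omega psi -> Omega u -> Omega v -> u < v ->
  ex_derive psi u -> ex_derive psi v -> Derive psi u <= Derive psi v.
Proof.
move=> psi_convex Hu Hv uv /Derive_correct Du /Derive_correct Dv.
have chord x y : Omega x -> Omega y -> x <> y -> forall l, 0 < l < 1 ->
    psi (l * y + (1 - l) * x) <= l * psi y + (1 - l) * psi x.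
  by move=> Hx Hy xy l l_range; apply: Rlt_le; apply: psi_convex => //; lra.
have := convex_tangent_le Du (chord u v Hu Hv ltac:(lra)).
have := convex_tangent_le Dv (chord v u Hv Hu ltac:(lra)).
nra.
Qed.

Lemma strictly_convex_Derive2_ge0 (Omega : R -> Prop) (psi : R -> R) u :
  open Omega -> strictly_convex_on Omega psi ->
  (forall x, Omega x -> ex_derive psi x) -> ex_derive (Derive psi) u ->
  Omega u -> 0 <= Derive (Derive psi) u.
Proof.
move=> Omega_open psi_convex psi_ex /Derive_correct D2 Hu.
have [eps near_u] := Omega_open u Hu.
apply: (is_derive_ge0_right_nondecreasing D2 (cond_pos eps)) => h h_range.
have Huh : Omega (u + h).
  apply: near_u; change (Rabs (u + h - u) < eps).
  by rewrite Rplus_minus_l Rabs_pos_eq; lra.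
apply: strictly_convex_Derive_le psi_convex Hu Huh _ (psi_ex _ Hu) (psi_ex _ Huh); lra.
Qed.

Lemma Derive_mul_Derive_linv (phi h : R -> R) u :
  locally u (fun t => h (phi t) = t) -> ex_derive h (phi u) -> ex_derive phi u ->
  Derive phi u * Derive h (phi u) = 1.
Proof.
move=> h_linv /Derive_correct Dh /Derive_correct Dphi.
have Dcomp := is_derive_comp h phi u _ _ Dh Dphi.
have Did := is_derive_ext_loc _ _ _ _ h_linv Dcomp.
by rewrite -(Derive_id u); symmetry; apply: is_derive_unique.
Qed.

Section LeftInverseOfDerivative.

Variables (Omega : R -> Prop) (f h : R -> R).
Hypotheses (Omega_open : open Omega)
  (Df_ex : forall x, Omega x -> ex_derive (Derive f) x)
  (h_linv : forall x, Omega x -> h (Derive f x) = x)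
  (h_ex : forall x, Omega x -> ex_derive h (Derive f x))
  (h_convex : forall x y l, Omega x -> Omega y -> 0 <= l <= 1 ->
     h (l * Derive f x + (1 - l) * Derive f y)
       <= l * h (Derive f x) + (1 - l) * h (Derive f y)).

Lemma Derive2_mul_Derive_linv u :
  Omega u -> Derive (Derive f) u * Derive h (Derive f u) = 1.
Proof.
move=> Hu; apply: Derive_mul_Derive_linv (h_ex Hu) (Df_ex Hu).
exact: filter_imp h_linv (Omega_open Hu).
Qed.

Lemma Derive_linv_tangent u v :
  Omega u -> Omega v -> (Derive f v - Derive f u) / Derive (Derive f) u <= v - u.
Proof.
move=> Hu Hv; have one := Derive2_mul_Derive_linv Hu.
have D2f_neq0 : Derive (Derive f) u <> 0 by move=> D0; rewrite D0 Rmult_0_l in one; lra.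
have -> : (Derive f v - Derive f u) / Derive (Derive f) u
    = Derive h (Derive f u) * (Derive f v - Derive f u).
  by rewrite (Rmult_inv_r_uniq _ _ D2f_neq0 one) /Rdiv Rmult_comm.
have h_chord l : 0 < l < 1 ->
    h (l * Derive f v + (1 - l) * Derive f u)
      <= l * h (Derive f v) + (1 - l) * h (Derive f u).
  by move=> l_range; apply: h_convex => //; lra.
by have := convex_tangent_le (Derive_correct _ _ (h_ex Hu)) h_chord; rewrite !h_linv.
Qed.

End LeftInverseOfDerivative.

Lemma ex_derive_scal_inv (f : R -> R) k x :
  k <> 0 -> ex_derive (fun y => k * f y) x -> ex_derive f x.
Proof.
move=> k_neq0 /(ex_derive_scal _ (/ k)); apply: ex_derive_ext => y.
by rewrite -Rmult_assoc Rinv_l // Rmult_1_l.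
Qed.

Lemma Derive2_scal (f : R -> R) k x :
  Derive (Derive (fun y => k * f y)) x = k * Derive (Derive f) x.
Proof. by rewrite (Derive_ext _ _ _ (Derive_scal f k)) Derive_scal. Qed.

Lemma omega_open_interval_open (Omega : R -> Prop) :
  omega_open_interval Omega -> open Omega.
Proof.
move=> [_ Omega_nbhd] x /Omega_nbhd [eps [eps_gt0 near_x]].
by exists (mkposreal eps eps_gt0).
Qed.

Lemma regular_rate_ex_derive (Omega : R -> Prop) (psi : R -> R) g x :
  g <> 0 -> regular_rate Omega psi g -> Omega x ->
  ex_derive psi x /\ ex_derive (Derive psi) x.
Proof.
move=> g_neq0 [f_twice _] /f_twice [Df D2f]; split; first exact: ex_derive_scal_inv Df.
apply: (ex_derive_scal_inv g_neq0); apply: ex_derive_ext D2f => y.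
exact: Derive_scal.
Qed.

Lemma regular_rate_gradient_step (Omega : R -> Prop) (psi : R -> R) g u v :
  open Omega -> strictly_convex_on Omega psi -> 0 < g -> regular_rate Omega psi g ->
  Omega u -> Omega v ->
  0 < Derive (Derive psi) u /\
  (g * Derive psi v - g * Derive psi u) / (g * Derive (Derive psi) u) <= v - u.
Proof.
move=> Omega_open psi_convex g_gt0 rate Hu Hv.
have psi_ex x : Omega x -> ex_derive psi x /\ ex_derive (Derive psi) x.
  by apply: regular_rate_ex_derive rate; lra.
case: rate => f_twice [h [h_linv [h_ex h_convex]]].
have Df_ex x : Omega x -> ex_derive (Derive (fun y => g * psi y)) x.
  by move=> /f_twice [].
split.
- have one := Derive2_mul_Derive_linv Omega_open Df_ex h_linv h_ex Hu.
  have ge0 := strictly_convex_Derive2_ge0 Omega_open psi_convex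
    (fun x Hx => proj1 (psi_ex x Hx)) (proj2 (psi_ex u Hu)) Hu.
  have [// | D0] := Rle_lt_or_eq_dec _ _ ge0.
  by rewrite Derive2_scal -D0 Rmult_0_r Rmult_0_l in one; lra.
- have := Derive_linv_tangent Omega_open Df_ex h_linv h_ex h_convex Hu Hv.
  by rewrite !Derive_scal Derive2_scal.
Qed.

Lemma grad_phiE K (g : 'I_K -> R) psi (I : {set 'I_K}) x i :
  i \in I -> ex_derive psi (x i) -> grad_phi g psi I x i = g i * Derive psi (x i).
Proof.
move=> Ii psi_ex; rewrite /grad_phi.
set C := \big[Rplus/0]_(j in I | j != i) (g j * psi (x j)).
rewrite (Derive_ext _ (fun y => g i * psi y + C)); last first.
  move=> y; rewrite /phi /sumI (bigD1 i Ii) /= eqxx; congr (_ + _).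
  by apply: eq_bigr => j /andP [_ /negbTE ->].
rewrite Derive_plus ?Derive_const ?Derive_scal; first ring.
  exact: ex_derive_scal.
exact: ex_derive_const.
Qed.

Section MirrorStep.

Variables (K : nat) (I : {set 'I_K}) (Omega : R -> Prop) (psi : R -> R).
Variables (a b lhat p q : 'I_K -> R) (c : R).
Hypotheses (I_neq0 : I != set0) (Omega_open : open Omega)
  (psi_convex : strictly_convex_on Omega psi)
  (pq_in : forall i, i \in I -> Omega (p i) /\ Omega (q i))
  (sum_pq : sumI I p = sumI I q)
  (grad_eq : forall i, i \in I -> grad_phi a psi I q i = grad_phi b psi I p i - lhat i + c).

Lemma grad_eq_Derive i :
  i \in I -> (forall x, Omega x -> ex_derive psi x) ->
  a i * Derive psi (q i) = b i * Derive psi (p i) - lhat i + c.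
Proof.
move=> Ii psi_ex; have [Hp Hq] := pq_in Ii.
by rewrite -(grad_phiE a Ii (psi_ex _ Hq)) -(grad_phiE b Ii (psi_ex _ Hp)) grad_eq.
Qed.

Lemma mirror_step_upper :
  (forall i, 0 < a i) -> (forall i, regular_rate Omega psi (a i)) ->
  c <= / sumI I (fun i => 1 / (a i * Derive (Derive psi) (p i))) *
       sumI I (fun i => ((a i - b i) * Derive psi (p i) + lhat i)
                        / (a i * Derive (Derive psi) (p i))).
Proof.
move=> a_gt0 a_rate.
apply: le_sumI_ratio (esym sum_pq) => // i Ii; have [Hp Hq] := pq_in Ii;
  have [D2_gt0 step] := regular_rate_gradient_step Omega_open psi_convex
    (a_gt0 i) (a_rate i) Hp Hq.
- exact: Rmult_lt_0_compat.
- have psi_ex x : Omega x -> ex_derive psi x.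
    by case/(regular_rate_ex_derive (Rgt_not_eq _ _ (a_gt0 i)) (a_rate i)).
  rewrite (_ : c - _ = a i * Derive psi (q i) - a i * Derive psi (p i)); first exact: step.
  by have := grad_eq_Derive Ii psi_ex; lra.
Qed.

Lemma mirror_step_lower :
  (forall i, 0 < b i) -> (forall i, regular_rate Omega psi (b i)) ->
  / sumI I (fun i => 1 / (b i * Derive (Derive psi) (q i))) *
    sumI I (fun i => ((a i - b i) * Derive psi (q i) + lhat i)
                     / (b i * Derive (Derive psi) (q i))) <= c.
Proof.
move=> b_gt0 b_rate.
apply: sumI_ratio_le sum_pq => // i Ii; have [Hp Hq] := pq_in Ii;
  have [D2_gt0 step] := regular_rate_gradient_step Omega_open psi_convex
    (b_gt0 i) (b_rate i) Hq Hp.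
- exact: Rmult_lt_0_compat.
- have psi_ex x : Omega x -> ex_derive psi x.
    by case/(regular_rate_ex_derive (Rgt_not_eq _ _ (b_gt0 i)) (b_rate i)).
  rewrite (_ : _ - c = b i * Derive psi (p i) - b i * Derive psi (q i)); first exact: step.
  by have := grad_eq_Derive Ii psi_ex; lra.
Qed.

End MirrorStep.

Theorem lemma35 (K : nat) (I : {set 'I_K}) (Omega : R -> Prop) (psi : R -> R)
  (gt gt1 : 'I_K -> R) (lhat : 'I_K -> R) (c : R) (p q : 'I_K -> R) :
  I != set0 ->
  omega_open_interval Omega ->
  strictly_convex_on Omega psi ->
  (forall i, 0 < gt i) -> (forall i, 0 < gt1 i) ->
  (forall i, regular_rate Omega psi (gt i)) ->
  (forall i, regular_rate Omega psi (gt1 i)) ->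
  (forall i, i \in I -> Omega (p i) /\ Omega (q i)) ->
  sumI I p = sumI I q ->
  ((forall i, i \in I ->
      grad_phi gt1 psi I q i = grad_phi gt psi I p i - lhat i + c) ->
   c <= / sumI I (fun i => 1 / (gt1 i * Derive (Derive psi) (p i))) *
        sumI I (fun i => ((gt1 i - gt i) * Derive psi (p i) + lhat i)
                         / (gt1 i * Derive (Derive psi) (p i)))
   /\
   / sumI I (fun i => 1 / (gt i * Derive (Derive psi) (q i))) *
        sumI I (fun i => ((gt1 i - gt i) * Derive psi (q i) + lhat i)
                         / (gt i * Derive (Derive psi) (q i))) <= c)
  /\
  ((forall i, i \in I ->
      grad_phi gt psi I q i = grad_phi gt psi I p i - lhat i + c) ->
   / sumI I (fun i => 1 / (gt i * Derive (Derive psi) (q i))) *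
        sumI I (fun i => lhat i / (gt i * Derive (Derive psi) (q i))) <= c
   /\
   c <= / sumI I (fun i => 1 / (gt i * Derive (Derive psi) (p i))) *
        sumI I (fun i => lhat i / (gt i * Derive (Derive psi) (p i)))).
Proof.
move=> I_neq0 /omega_open_interval_open Omega_open psi_convex gt_gt0 gt1_gt0
  gt_rate gt1_rate pq_in sum_pq.
have same_rate (x d : 'I_K -> R) :
    sumI I (fun i => ((gt i - gt i) * x i + lhat i) / d i)
    = sumI I (fun i => lhat i / d i).
  by apply: eq_sumI => i; rewrite Rminus_diag Rmult_0_l Rplus_0_l.
split=> grad_eq; split.
- exact: mirror_step_upper grad_eq gt1_gt0 gt1_rate.
- exact: mirror_step_lower grad_eq gt_gt0 gt_rate.
- rewrite -(same_rate (fun i => Derive psi (q i))).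
  exact: mirror_step_lower grad_eq gt_gt0 gt_rate.
- rewrite -(same_rate (fun i => Derive psi (p i))).
  exact: mirror_step_upper grad_eq gt_gt0 gt_rate.
Qed.
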